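(* Let $(H,k,\chi)$ be an instance of Precoloring Extension with $H=(\{1,\dots,n\},F)$ having at least one edge and $\chi:V_0\to\{1,\dots,k\}$. Let $X=nk+1$; let $u_j=\chi(j)$, $\ell_j=\chi(j)$ for $j\in V_0$ and $u_j=k$, $\ell_j=1$ for $j\notin V_0$. Construct a $P_n\,|\,\mathrm{conc}\,|\,\sum C_j$ instance: jobs $1,\dots,n$ with $p_j=1$ and conflict graph initially $H$; for each $j\in\{1,\dots,n\}$, jobs $j(1),\dots,j(X)$ with processing time $X-u_j$, each in conflict with $j$, and for each $i\in\{1,\dots,X\}$ jobs $j(i,1),\dots,j(i,X)$ with processing time $u_j$, each in conflict with $j(i)$; for each $j\in V_0$ with $\chi(j)>1$, jobs $j^*(1),\dots,j^*(X)$ with processing time $\ell_j-1$, each in conflict with $j$ only. Let $K=\sum_{j=1}^n\big[(1+u_j)X^2+(\ell_j-1)X\big]+nk$. If $(H,k,\chi)$ has a solution $\chi':\{1,\dots,n\}\to\{1,\dots,k\}$, then the constructed instance has a feasible schedule with total completion time at most $K$.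
   Context: Precoloring Extension: given a graph $H=(V,F)$, an integer $k$, and a proper coloring $\chi:V_0\to\{1,\dots,k\}$ of $H[V_0]$ for some $V_0\subseteq V$, a solution is a proper coloring $\chi':V\to\{1,\dots,k\}$ of $H$ with $\chi'(v)=\chi(v)$ for all $v\in V_0$. In $P_n\,|\,\mathrm{conc}\,|\,\sum C_j$, each job $j$ has integer processing time $p_j\ge1$ and release time $0$, and there is a conflict graph $G$ (the edges listed); a schedule assigning completion times $C_j\in\mathbb{N}$ is feasible if $C_j-p_j\ge0$ for all $j$ and $[C_i-p_i,C_i)\cap[C_j-p_j,C_j)=\emptyset$ for all conflicting pairs $\{i,j\}$; the total completion time is $\sum_j C_j$ over all jobs. *)

From mathcomp Require Import all_boot.
Set Implicit Arguments. Unset Strict Implicit. Unset Printing Implicit Defensive.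

(* Vertices/jobs 1..n are represented by 'I_n (0..n-1); indices 1..X by 'I_X. *)

Definition proper_on (n : nat) (H : rel 'I_n) (A : {set 'I_n}) (c : 'I_n -> nat) :=
  forall i j, i \in A -> j \in A -> H i j -> c i <> c j.

Definition precoloring (n k : nat) (H : rel 'I_n) (V0 : {set 'I_n}) (chi : 'I_n -> nat) :=
  (forall j, j \in V0 -> 1 <= chi j <= k) /\ proper_on H V0 chi.

Definition pce_solution (n k : nat) (H : rel 'I_n) (V0 : {set 'I_n})
  (chi : 'I_n -> nat) (chi' : 'I_n -> nat) :=
  (forall j, 1 <= chi' j <= k) /\ proper_on H setT chi' /\
  (forall j, j \in V0 -> chi' j = chi j).

Definition feasible_schedule (J : finType) (p : J -> nat) (conf : rel J) (C : J -> nat) :=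
  (forall j, p j <= C j) /\
  (forall i j, conf i j ->
     forall t, ~ ((C i - p i <= t < C i) /\ (C j - p j <= t < C j))).

Definition total_completion (J : finType) (C : J -> nat) := \sum_(j : J) C j.

Section Reduction.
Variables (n k : nat) (H : rel 'I_n) (V0 : {set 'I_n}) (chi : 'I_n -> nat).

Definition Xr := n * k + 1.
Definition ur (j : 'I_n) := if j \in V0 then chi j else k.
Definition lr (j : 'I_n) := if j \in V0 then chi j else 1.
Definition star_pred (j : 'I_n) := (j \in V0) && (1 < chi j).

(* base jobs j; jobs j(i); jobs j(i,i'); jobs j^*(i) for j in V0 with chi j > 1 *)
Definition red_job : finType :=
  (('I_n + ('I_n * 'I_Xr)) + (('I_n * 'I_Xr * 'I_Xr) + ({j : 'I_n | star_pred j} * 'I_Xr)))%type.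

Definition red_p (x : red_job) : nat :=
  match x with
  | inl (inl j) => 1
  | inl (inr (j, i)) => Xr - ur j
  | inr (inl (j, i, i')) => ur j
  | inr (inr (js, i)) => lr (val js) - 1
  end.

Definition red_edge (x y : red_job) : bool :=
  match x, y with
  | inl (inl a), inl (inl b) => H a b
  | inl (inl a), inl (inr (j, i)) => a == j
  | inl (inr (j, i)), inr (inl (j', i', _)) => (j == j') && (i == i')
  | inl (inl a), inr (inr (js, i)) => a == val js
  | _, _ => false
  end.

Definition red_conf : rel red_job := fun x y => red_edge x y || red_edge y x.

Definition red_K : nat :=
  \sum_(j < n) ((1 + ur j) * Xr ^ 2 + (lr j - 1) * Xr) + n * k.
End Reduction.

From mathcomp Require Import all_boot zify.

Set Implicit Arguments.
Unset Strict Implicit.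
Unset Printing Implicit Defensive.

(* Schedule every base job j in the unit slot [chi' j - 1, chi' j), so that a
   proper colouring keeps conflicting base jobs apart.  Each j(i) runs in
   [u_j, X) after its base job (as chi' j <= u_j), each j(i,i') runs in
   [0, u_j) before its j(i), and each j^*(i) runs in [0, chi j - 1) before j.
   Summing the completion times gives at most
   n k + n X^2 + sum_j u_j X^2 + sum_j (l_j - 1) X = K. *)

Lemma feasible_schedule_of_precedence (J : finType) (p : J -> nat) (e : rel J)
    (C : J -> nat) :
  (forall j, p j <= C j) ->
  (forall i j, e i j -> C i <= C j - p j \/ C j <= C i - p i) ->
  feasible_schedule p (fun i j => e i j || e j i) C.
Proof.
move=> p_le_C e_sep; split=> // i j /orP[] /e_sep sep t; lia.
Qed.

Lemma leq_sum_sig (I : finType) (P : pred I) (F : I -> nat) :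
  \sum_(x : {j | P j}) F (val x) <= \sum_j F j.
Proof. by rewrite (bigID P) /= -big_sub leq_addr. Qed.

Lemma sum_fst_ord {I : finType} {m : nat} (F : I -> nat) :
  \sum_(q : I * 'I_m) F q.1 = \sum_i F i * m.
Proof.
rewrite -(pair_big xpredT xpredT (fun i (_ : 'I_m) => F i)) /=.
by apply: eq_bigr => i _; rewrite sum_nat_const card_ord mulnC.
Qed.

Section ReductionSchedule.
Variables (n k : nat) (H : rel 'I_n) (V0 : {set 'I_n}) (chi c : 'I_n -> nat).
Hypothesis c_sol : pce_solution k H V0 chi c.

Local Notation X := (Xr n k).
Local Notation u := (ur k V0 chi).
Local Notation l := (lr V0 chi).

Definition red_schedule (x : red_job k V0 chi) : nat :=
  match x with
  | inl (inl j) => c j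
  | inl (inr (j, _)) => X
  | inr (inl (j, _, _)) => u j
  | inr (inr (js, _)) => l (val js) - 1
  end.

Lemma solution_le_ur j : 0 < c j /\ c j <= u j <= k.
Proof.
case: c_sol => c_range [_ c_agree]; have := c_range j.
by rewrite /ur; case: ifP => [/c_agree -> | _]; lia.
Qed.

Lemma ur_lt_Xr j : u j < X.
Proof.
have := solution_le_ur j; have := ltn_ord j; rewrite /Xr; nia.
Qed.

Lemma lr_star j : star_pred V0 chi j -> l j = c j.
Proof. by case: c_sol => _ [_ c_agree] /andP[jV _]; rewrite /lr jV c_agree. Qed.

Lemma red_schedule_feasible :
  feasible_schedule (@red_p n k V0 chi) (@red_conf n k H V0 chi) red_schedule.
Proof.
case: c_sol => _ [c_proper _].
apply: feasible_schedule_of_precedence.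
  case=> [[j|[j i]]|[[[j i] i']|[js i]]] /=; rewrite /red_p //.
  - by have := solution_le_ur j; lia.
  - lia.
case=> [[a|[j i]]|[[[j i] i']|[js i]]];
  case=> [[b|[j2 i2]]|[[[j2 i2] i3]|[js2 i2]]] //= edge; rewrite /red_p.
- have := c_proper a b (in_setT _) (in_setT _) edge.
  have := solution_le_ur a; have := solution_le_ur b; lia.
- by move/eqP: edge => <-; have := solution_le_ur a; lia.
- by rewrite (eqP edge) lr_star; [lia | exact: (svalP js2)].
- by case/andP: edge => /eqP <- /eqP _; have := ur_lt_Xr j; lia.
Qed.

Lemma red_schedule_total : total_completion red_schedule <= red_K k V0 chi.
Proof.
rewrite /total_completion /red_K !big_sumType.
have base : \sum_(j : 'I_n) red_schedule (inl (inl j)) <= n * k.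
  rewrite -[n in n * k]card_ord -sum_nat_const.
  by apply: leq_sum => j _ /=; have := solution_le_ur j; lia.
have outer : \sum_(q : 'I_n * 'I_X) red_schedule (inl (inr q)) = \sum_(j < n) X * X.
  by rewrite -(sum_fst_ord (fun _ : 'I_n => X)); apply: eq_bigr => -[].
have inner : \sum_(q : 'I_n * 'I_X * 'I_X) red_schedule (inr (inl q))
    = \sum_(j < n) u j * X * X.
  rewrite -(sum_fst_ord (fun j => u j * X)).
  rewrite -(sum_fst_ord (fun q : 'I_n * 'I_X => u q.1)).
  by apply: eq_bigr => -[[]].
have star : \sum_(q : {j | star_pred V0 chi j} * 'I_X) red_schedule (inr (inr q))
    <= \sum_(j < n) (l j - 1) * X.
  rewrite (eq_bigr (fun q => l (val q.1) - 1)); last by case.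
  by rewrite (sum_fst_ord (fun js => l (val js) - 1)) leq_sum_sig.
have K_split : \sum_(j < n) ((1 + u j) * X ^ 2 + (l j - 1) * X)
    = \sum_(j < n) X * X + \sum_(j < n) u j * X * X + \sum_(j < n) (l j - 1) * X.
  by rewrite -!big_split; apply: eq_bigr => j _; rewrite mulnDl mul1n mulnA.
rewrite outer inner K_split /=; move: base star => /= base star; lia.
Qed.

End ReductionSchedule.

Theorem lemma11 (n k : nat) (H : rel 'I_n) (V0 : {set 'I_n}) (chi : 'I_n -> nat) :
  symmetric H -> irreflexive H -> (exists i j, H i j) ->
  precoloring k H V0 chi ->
  (exists chi' : 'I_n -> nat, pce_solution k H V0 chi chi') ->
  exists C : red_job k V0 chi -> nat,
    feasible_schedule (@red_p n k V0 chi) (@red_conf n k H V0 chi) C /\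
    total_completion C <= red_K k V0 chi.
Proof.
move=> _ _ _ _ [c c_sol]; exists (red_schedule c); split.
- exact: red_schedule_feasible c_sol.
- exact: red_schedule_total c_sol.
Qed.
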